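(* Let $A\subset\mathbb{R}$ and $a\in\mathbb{R}$. Then the following are equivalent: (i) every function $f:A\to\mathbb{R}$ which has a $T_5$ limit at $a$ has exactly one $T_5$ limit at $a$ (i.e. if $T_5\lim_{x\to a}f(x)=L_1$ and $T_5\lim_{x\to a}f(x)=L_2$ then $L_1=L_2$); (ii) for every real $\delta>0$ the set $\left((a-\delta,a+\delta)\setminus\{a\}\right)\cap A$ is uncountable.
   Context: For $A\subset\mathbb{R}$, $f:A\to\mathbb{R}$ and $a,L\in\mathbb{R}$, one writes $T_5\lim_{x\to a}f(x)=L$ (and says $L$ is a $T_5$ limit of $f$ at $a$) if for every real $\varepsilon>0$ there exists a real $\delta_\varepsilon>0$ such that the set $\left\{x\in\left((a-\delta_{\varepsilon},a+\delta_{\varepsilon})\setminus\{a\}\right)\cap A:\ |f(x)-L|\geq\varepsilon\right\}$ is countable (finite or countably infinite). *)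

From HB Require Import structures.
From mathcomp Require Import all_boot all_order all_algebra.
From mathcomp Require Import all_classical all_reals.
Set Implicit Arguments. Unset Strict Implicit. Unset Printing Implicit Defensive.
Import Order.TTheory GRing.Theory Num.Theory.
Local Open Scope classical_set_scope.
Local Open Scope ring_scope.

Definition punct_nbhd (R : realType) (A : set R) (a d : R) : set R :=
  [set x | a - d < x < a + d /\ x != a /\ A x].

(* T5 lim_{x -> a} f(x) = L, for f : A -> R (f is given as a function on R,
   only its values on A matter). *)
Definition T5_limit (R : realType) (A : set R) (f : R -> R) (a L : R) : Prop :=
  forall eps : R, 0 < eps -> exists2 d : R, 0 < d &
    countable [set x | punct_nbhd A a d x /\ eps <= `|f x - L|].

From HB Require Import structures.
From mathcomp Require Import all_boot all_order all_algebra.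
From mathcomp Require Import all_classical all_reals.
Import Order.TTheory GRing.Theory Num.Theory.
Local Open Scope classical_set_scope.
Local Open Scope ring_scope.

(* If the punctured neighbourhoods are countable, the defining sets of a T5
   limit are countable for every candidate L, so every L is a T5 limit.
   Conversely, two limits L1 <> L2 at level |L1 - L2| / 2 would cover a
   punctured neighbourhood by two countable exceptional sets, since no value
   can be that close to both. *)

Lemma countableS {T} {A B : set T} : A `<=` B -> countable B -> countable A.
Proof. by move=> /subset_card_le; apply: sub_countable. Qed.

Lemma countableU {T} {A B : set T} :
  countable A -> countable B -> countable (A `|` B).
Proof.
move=> cA cB.
have -> : A `|` B = \bigcup_(b in [set: bool]) (if b then A else B).
  apply/seteqP; split=> x; first by case=> ?; [exists true | exists false].
  by case=> -[] _ /= ?; [left | right].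
by apply: bigcup_countable => // -[].
Qed.

Lemma half_dist_le_dist {R : realFieldType} (y L1 L2 : R) :
  `|L1 - L2| / 2 <= `|y - L1| \/ `|L1 - L2| / 2 <= `|y - L2|.
Proof.
have [|lt1] := leP (`|L1 - L2| / 2) `|y - L1|; first by left.
right; rewrite leNgt; apply/negP => lt2.
rewrite distrC in lt1.
have := le_lt_trans (ler_distD y L1 L2) (ltrD lt1 lt2).
by rewrite -splitr ltxx.
Qed.

Section T5Limit.
Context {R : realType} {A : set R} {a : R}.

Lemma punct_nbhd_le d1 d2 :
  d1 <= d2 -> punct_nbhd A a d1 `<=` punct_nbhd A a d2.
Proof.
move=> d12 x [/andP[xl xr] xaA]; split=> //; apply/andP; split.
- by apply: le_lt_trans xl; rewrite lerD2l lerN2.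
- by apply: (lt_le_trans xr); rewrite lerD2l.
Qed.

Lemma T5_limit_countable_punct_nbhd {d} :
  0 < d -> countable (punct_nbhd A a d) -> forall f L, T5_limit A f a L.
Proof.
by move=> d0 cd f L e _; exists d => //; apply: (countableS _ cd) => x [].
Qed.

Lemma T5_limit_unique f L1 L2 :
  (forall d, 0 < d -> ~ countable (punct_nbhd A a d)) ->
  T5_limit A f a L1 -> T5_limit A f a L2 -> L1 = L2.
Proof.
move=> unc lim1 lim2; have [//|L12] := eqVneq L1 L2; exfalso.
pose e := `|L1 - L2| / 2.
have e0 : 0 < e by rewrite divr_gt0 // normr_gt0 subr_eq0.
have [d1 d10 c1] := lim1 e e0.
have [d2 d20 c2] := lim2 e e0.
apply: (unc (Num.min d1 d2)); first by rewrite lt_min d10 d20.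
apply: (countableS _ (countableU c1 c2)) => x x_near.
have x_near1 : punct_nbhd A a d1 x.
  by apply: punct_nbhd_le x_near; rewrite ge_min lexx.
have x_near2 : punct_nbhd A a d2 x.
  by apply: punct_nbhd_le x_near; rewrite ge_min lexx orbT.
by case: (half_dist_le_dist (f x) L1 L2); [left | right].
Qed.

End T5Limit.

Theorem theorem2 (R : realType) (A : set R) (a : R) :
  (forall f : R -> R, forall L1 L2 : R,
     T5_limit A f a L1 -> T5_limit A f a L2 -> L1 = L2)
  <->
  (forall d : R, 0 < d -> ~ countable (punct_nbhd A a d)).
Proof.
split=> [uniq d d0 cd | unc f L1 L2]; last exact: T5_limit_unique.
have every_limit := T5_limit_countable_punct_nbhd d0 cd (fun=> 0).
by have /eqP := uniq _ _ _ (every_limit 0) (every_limit 1); rewrite eq_sym oner_eq0.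
Qed.
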